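(* Let $G$ be a $2$-dc-semigroup. \begin{enumerate} \item The set $U_2=\{I_2(i,k): i\in\mathbf{N},\ k\in\mathbf{N}^*\}$, endowed with the operation \[ I_2(i,k)\cdot I_2(j,l)=\begin{cases} I_2(j,l) & \text{if } i=0 \text{ and } k=1,\\ I_2(i,k) & \text{if } j=0 \text{ and } l=1,\\ I_2(i+j,k+l) & \text{otherwise},\end{cases} \] is an abelian semigroup. \item If $i,j\in\mathbf{N}$, $k,l\in\mathbf{N}^*$, $I_2(i,k)\subseteq G$ and $I_2(j,l)\subseteq G$, then $I_2(i,k)\cdot I_2(j,l)\subseteq G$, where the product is the operation defined in (1). \end{enumerate}
   Context: $\mathbf{N}=\{0,1,2,\dots\}$ and $\mathbf{N}^*=\mathbf{N}\setminus\{0\}$. A $2$-dc-semigroup is a subsemigroup $G$ of the multiplicative semigroup $(\mathbf{N}^*,\cdot)$ which is closed with respect to the number of binary digits: if $x\in G$ and $2^{n-1}\le x<2^n$ then $\{y\in\mathbf{N}: 2^{n-1}\le y<2^n\}\subseteq G$. For $i\in\mathbf{N}$ and $j\in\mathbf{N}^*$, $I_2(i,j)=\{x\in\mathbf{N}: 2^i\le x<2^{i+j}\}$. *)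

From mathcomp Require Import all_boot.
Set Implicit Arguments. Unset Strict Implicit. Unset Printing Implicit Defensive.

Definition I2 (i j : nat) : nat -> Prop := fun x => 2 ^ i <= x < 2 ^ (i + j).

Definition nsubset (A B : nat -> Prop) : Prop := forall x, A x -> B x.

(* G is a 2-dc-semigroup: a subsemigroup of (N-star, multiplication) closed w.r.t. the
   number of binary digits. *)
Definition is_2dc_semigroup (G : nat -> Prop) : Prop :=
  (forall x, G x -> 0 < x) /\
  (forall x y, G x -> G y -> G (x * y)) /\
  (forall x n, G x -> 2 ^ n.-1 <= x < 2 ^ n ->
     forall y, 2 ^ n.-1 <= y < 2 ^ n -> G y).

(* The operation on U_2, expressed on the index pairs (i,k) of I_2(i,k)
   (well defined since (i,k) |-> I_2(i,k) is injective for k >= 1). *)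
Definition U2op (a b : nat * nat) : nat * nat :=
  if (a.1 == 0) && (a.2 == 1) then b
  else if (b.1 == 0) && (b.2 == 1) then a
  else (a.1 + b.1, a.2 + b.2).

From mathcomp Require Import all_boot.
From mathcomp Require Import zify.

(* The intervals I_2(t,1) = [2^t, 2^(t+1)) are the classes of numbers with
   t+1 binary digits, so a 2-dc-semigroup contains I_2(t,1) as soon as it meets
   it. Hence I_2(i+j,k+l) lies in G once G meets each of its k+l digit classes.
   All but the top one contain a power 2^(p+q) = 2^p * 2^q with 2^p in I_2(i,k)
   and 2^q in I_2(j,l); the top one contains (2^(i+k) - 1) * (2^(j+l) - 1),
   which needs i+k, j+l >= 2, i.e. neither factor is the neutral I_2(0,1). *)

Lemma mem_pow2_I2 i k p : I2 i k (2 ^ p) <-> i <= p < i + k.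
Proof. by rewrite /I2 leq_exp2l // ltn_exp2l. Qed.

Lemma mem_pred_pow2_I2 i k : 0 < k -> I2 i k (2 ^ (i + k)).-1.
Proof.
move=> k_gt0; have : 2 ^ i < 2 ^ (i + k) by rewrite ltn_exp2l //; lia.
rewrite /I2; lia.
Qed.

Lemma I2_inj i k j l : 0 < k -> 0 < l -> I2 i k = I2 j l -> i = j /\ k = l.
Proof.
move=> k_gt0 l_gt0 eqI.
have mem_pow2 p : i <= p < i + k <-> j <= p < j + l.
  by rewrite -!mem_pow2_I2 eqI.
have /mem_pow2 lo1 : i <= i < i + k by lia.
have /mem_pow2 hi1 : i <= (i + k).-1 < i + k by lia.
have /mem_pow2 lo2 : j <= j < j + l by lia.
have /mem_pow2 hi2 : j <= (j + l).-1 < j + l by lia.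
lia.
Qed.

Lemma I2_digit_class i k x :
  I2 i k x -> I2 (trunc_log 2 x) 1 x /\ i <= trunc_log 2 x < i + k.
Proof.
rewrite /I2 addn1 => /andP[lo hi].
have x_gt0 : 0 < x by apply: leq_trans lo; exact: expn_gt0.
have /andP[tlo thi] := trunc_log_bounds (isT : 1 < 2) x_gt0.
split; first by rewrite tlo thi.
apply/andP; split; first exact: trunc_log_max.
by rewrite -(ltn_exp2l _ _ (isT : 1 < 2)); apply: leq_ltn_trans hi.
Qed.

Lemma pred_pow2_mul_digit_class m n :
  1 < m -> 1 < n -> I2 (m + n).-1 1 ((2 ^ m).-1 * (2 ^ n).-1).
Proof.
move=> m_gt1 n_gt1.
have [m' ->] : exists m', m = m'.+2 by exists m.-2; lia.
have [n' ->] : exists n', n = n'.+2 by exists n.-2; lia.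
have -> : (m'.+2 + n'.+2).-1 = m' + n' + 3 by lia.
rewrite /I2 addn1 !expnS !expnD.
have : 0 < 2 ^ m' by exact: expn_gt0.
have : 0 < 2 ^ n' by exact: expn_gt0.
(* with A = 2^m and B = 2^n: (A - 1) (B - 1) >= AB/2 since A, B >= 4 *)
move: (2 ^ m') (2 ^ n') => a b a_gt0 b_gt0.
apply/andP; split; nia.
Qed.

Lemma U2op_pos a b : 0 < a.2 -> 0 < b.2 -> 0 < (U2op a b).2.
Proof. by rewrite /U2op; case: ifP => // _; case: ifP => //= _; lia. Qed.

Lemma U2opC a b : 0 < a.2 -> 0 < b.2 -> U2op a b = U2op b a.
Proof.
case: a b => [[|a1] [|[|a2]]] [[|b1] [|[|b2]]] //= _ _;
  rewrite /U2op /=; congr (_, _); lia.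
Qed.

Lemma U2opA a b c : 0 < a.2 -> 0 < b.2 -> 0 < c.2 ->
  U2op a (U2op b c) = U2op (U2op a b) c.
Proof.
case: a b c => [[|a1] [|[|a2]]] [[|b1] [|[|b2]]] [[|c1] [|[|c2]]] //= _ _ _;
  rewrite /U2op /= ?addn0 ?addnS ?addSn /=;
  congr (_, _); fold Nat.add; rewrite -?plusE; lia.
Qed.

Section DigitClosed.

Variable G : nat -> Prop.
Hypothesis HG : is_2dc_semigroup G.

Lemma dc_digit_class z t : G z -> I2 t 1 z -> nsubset (I2 t 1) G.
Proof.
case: HG => _ [_ G_dc] Gz zt x xt.
by apply: (G_dc z t.+1 Gz _ x); rewrite /= -(addn1 t).
Qed.

Lemma I2_sub_of_digit_classes i k :
  (forall t, i <= t < i + k -> exists2 z, G z & I2 t 1 z) -> nsubset (I2 i k) G.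
Proof.
move=> meets x /I2_digit_class[xt /meets[z Gz zt]].
exact: dc_digit_class Gz zt x xt.
Qed.

Lemma I2_mul_sub i k j l :
  1 < i + k -> 1 < j + l -> 0 < k -> 0 < l ->
  nsubset (I2 i k) G -> nsubset (I2 j l) G -> nsubset (I2 (i + j) (k + l)) G.
Proof.
case: HG => _ [G_mul _] ik_gt1 jl_gt1 k_gt0 l_gt0 Gik Gjl.
apply: I2_sub_of_digit_classes => t /andP[t_lo t_hi].
have [t_top | t_low] := eqVneq t (i + k + (j + l)).-1.
  exists ((2 ^ (i + k)).-1 * (2 ^ (j + l)).-1).
    by apply: G_mul; [apply: Gik | apply: Gjl]; exact: mem_pred_pow2_I2.
  by rewrite t_top; exact: pred_pow2_mul_digit_class.
pose p := minn (t - j) (i + k).-1.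
have pI : I2 i k (2 ^ p) by apply/mem_pow2_I2; rewrite /p; lia.
have qI : I2 j l (2 ^ (t - p)) by apply/mem_pow2_I2; rewrite /p; lia.
exists (2 ^ p * 2 ^ (t - p)); first exact: G_mul (Gik _ pI) (Gjl _ qI).
by rewrite -expnD subnKC ?mem_pow2_I2 /p; lia.
Qed.

End DigitClosed.

Theorem lemma2p2 (G : nat -> Prop) (HG : is_2dc_semigroup G) :
  (* (1) U_2 with the operation is an abelian semigroup *)
  (forall i k j l, 0 < k -> 0 < l -> I2 i k = I2 j l -> i = j /\ k = l) /\
  (forall a b : nat * nat, 0 < a.2 -> 0 < b.2 -> 0 < (U2op a b).2) /\
  (forall a b : nat * nat, 0 < a.2 -> 0 < b.2 -> U2op a b = U2op b a) /\
  (forall a b c : nat * nat, 0 < a.2 -> 0 < b.2 -> 0 < c.2 ->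
     U2op a (U2op b c) = U2op (U2op a b) c) /\
  (* (2) *)
  (forall i k j l, 0 < k -> 0 < l ->
     nsubset (I2 i k) G -> nsubset (I2 j l) G ->
     nsubset (I2 (U2op (i, k) (j, l)).1 (U2op (i, k) (j, l)).2) G).
Proof.
split; first exact: I2_inj.
split; first exact: U2op_pos.
split; first exact: U2opC.
split; first exact: U2opA.
move=> i k j l k_gt0 l_gt0 Gik Gjl; rewrite /U2op /=.
case: ifP => [_ | ik_unit] //; case: ifP => [_ | jl_unit] //=.
by apply: I2_mul_sub; rewrite // ?k_gt0 ?l_gt0; move: ik_unit jl_unit; lia.
Qed.
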